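(* Let $X_1$ be a random variable with $\mathbb EX_1=0$, $\operatorname{Var}X_1=1$, such that $\varphi(t)=\log\mathbb Ee^{tX_1}<\infty$ for all $t\geq-\sigma_0$ for some $\sigma_0>0$, and let $I(s)=\sup_{t\geq0}(st-\varphi(t))$, $s\geq0$. Let $m_*>1$. The following are equivalent: (a) there is $t_*>0$ with $\frac{\varphi(t_* )}{t_*^2/2}=m_*$ and for every $\varepsilon>0$, $\sup_{0<t<t_*-\varepsilon}\frac{\varphi(t)}{t^2/2}<m_*$ and $\sup_{t>t_*+\varepsilon}\frac{\varphi(t)}{t^2/2}<m_*$; (b) there is $s_*>0$ with $\frac{I(s_* )}{s_*^2/2}=\frac1{m_*}$ and for every $\varepsilon>0$, $\inf_{0<s<s_*-\varepsilon}\frac{I(s)}{s^2/2}>\frac1{m_*}$ and $\inf_{s>s_*+\varepsilon}\frac{I(s)}{s^2/2}>\frac1{m_*}$. Moreover, if these hold, then $\varphi(t_* )=I(s_* )=s_*t_*/2$, $s_*=\varphi'(t_* )=t_*m_*$, $t_*=I'(s_* )=s_*/m_*$, and $I''(s_* )\varphi''(t_* )=1$. *)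

From HB Require Import structures.
From mathcomp Require Import all_boot all_order all_algebra.
From mathcomp Require Import all_classical all_reals all_analysis.
Set Implicit Arguments. Unset Strict Implicit. Unset Printing Implicit Defensive.
Import Order.TTheory GRing.Theory Num.Theory.
Import numFieldNormedType.Exports.
Local Open Scope classical_set_scope.
Local Open Scope ring_scope.

(* cumulant generating function  phi(t) = log E e^{tX}  (meaningful where the
   moment generating function 'M_P X t is finite) *)
Definition cgf d (T : measurableType d) (R : realType) (P : probability T R)
  (X : T -> R) (t : R) : R := ln (fine ('M_P X t)).

Definition rate d (T : measurableType d) (R : realType) (P : probability T R)
  (X : T -> R) (s : R) : \bar R :=
  ereal_sup [set ((s * t - cgf P X t)%:E) | t in [set t : R | 0 <= t]].

From HB Require Import structures.
From mathcomp Require Import all_boot all_order all_algebra.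
From mathcomp Require Import all_classical all_reals all_analysis.
From mathcomp Require Import ring lra.
Import measurable_realfun.
Import Order.TTheory GRing.Theory Num.Theory.
Import numFieldNormedType.Exports.
Local Open Scope classical_set_scope.
Local Open Scope ring_scope.
Set Implicit Arguments. Unset Strict Implicit. Unset Printing Implicit Defensive.

(* The cumulant generating function phi is smooth and strictly convex on (-sigma0, +oo):
   its derivatives are ratios of the tilted moments E[X^k e^(tX)], and phi'' is the
   variance of a tilted law.  Hence for t >= 0 the supremum defining I(phi'(t)) is
   attained at t, so I(phi'(t)) = t phi'(t) - phi(t), I' is the inverse of phi', and
   I''(phi'(t)) phi''(t) = 1.  Write g(t) = phi(t)/(t^2/2) and h(s) = I(s)/(s^2/2).
   Choosing t = s/m in the supremum gives h(s) >= 1/m + (m - g(s/m))/m^2, and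
   completing a square gives g(t) <= 1/h(phi'(t)).  At a maximiser t of g with value m,
   phi(u) - m u^2/2 is maximal at u = t, so phi'(t) = m t; the two inequalities then
   carry a well-separated maximum of g at t to a well-separated minimum of h at m t,
   and back. *)

Section ereal_bounds.
Context {R : realType} {T : Type}.
Implicit Types (S : set T) (f : T -> R) (F : T -> \bar R).

Lemma ereal_sup_EFin_ltP S f (m : R) :
  (ereal_sup [set (f x)%:E | x in S] < m%:E)%E <->
  exists2 c, c < m & forall x, S x -> f x <= c.
Proof.
split=> [|[c cm fc]]; last first.
  apply: (@le_lt_trans _ _ c%:E); last by rewrite lte_fin.
  by apply: ge_ereal_sup => _ [x Sx <-]; rewrite lee_fin fc.
have ub x : S x -> ((f x)%:E <= ereal_sup [set (f x)%:E | x in S])%E.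
  by move=> Sx; apply: ereal_sup_ubound; exists x.
case: (ereal_sup _) ub => [r| |] ub; rewrite ?ltry// => hr.
- by exists r => [|x /ub]; rewrite -?lte_fin -?lee_fin.
- exists (m - 1); first lra.
  by move=> x /ub; rewrite leeNy_eq.
Qed.

Lemma ereal_inf_gtP S F (a : R) :
  (a%:E < ereal_inf [set F x | x in S])%E <->
  exists2 c, a < c & forall x, S x -> (c%:E <= F x)%E.
Proof.
split=> [|[c ac Fc]]; last first.
  apply: (@lt_le_trans _ _ c%:E); first by rewrite lte_fin.
  by apply: le_ereal_inf_tmp => _ [x Sx <-]; exact: Fc.
have lb x : S x -> (ereal_inf [set F x | x in S] <= F x)%E.
  by move=> Sx; apply: ereal_inf_lbound; exists x.
case: (ereal_inf _) lb => [r| |] lb; rewrite ?ltNye// => hr.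
- by exists r => [|x /lb]; rewrite -?lte_fin.
- exists (a + 1); first lra.
  by move=> x /lb; rewrite leye_eq => /eqP ->; rewrite leey.
Qed.

End ereal_bounds.

Section well_separated.
Variable R : realType.

Definition well_separated_max (f : R -> R) (m x : R) :=
  [/\ 0 < x, f x = m,
      forall e, 0 < e ->
        (ereal_sup [set (f t)%:E | t in [set t | (0 < t < x - e)%R]] < m%:E)%E
    & forall e, 0 < e ->
        (ereal_sup [set (f t)%:E | t in [set t | (x + e < t)%R]] < m%:E)%E].

Definition well_separated_min (F : R -> \bar R) (a x : R) :=
  [/\ 0 < x, F x = a%:E,
      forall e, 0 < e -> (a%:E < ereal_inf [set F s | s in [set s | (0 < s < x - e)%R]])%E
    & forall e, 0 < e -> (a%:E < ereal_inf [set F s | s in [set s | (x + e < s)%R]])%E].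

Lemma well_separated_max_le f m x :
  well_separated_max f m x -> forall t, 0 < t -> f t <= m.
Proof.
case=> x0 fx left right t t0; have [tx|xt|->] := ltgtP t x; last by rewrite fx.
- have e0 : 0 < (x - t) / 2 by rewrite divr_gt0 ?subr_gt0.
  have /ereal_sup_EFin_ltP[c cm fc] := left _ e0.
  by apply: le_trans (ltW cm); apply: fc; apply/andP; split=> //; lra.
- have e0 : 0 < (t - x) / 2 by rewrite divr_gt0 ?subr_gt0.
  have /ereal_sup_EFin_ltP[c cm fc] := right _ e0.
  by apply: le_trans (ltW cm); apply: fc => /=; lra.
Qed.

Lemma well_separated_min_ge F a x :
  well_separated_min F a x -> forall s, 0 < s -> (a%:E <= F s)%E.
Proof.
case=> x0 Fx left right s s0; have [sx|xs|->] := ltgtP s x; last by rewrite Fx.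
- have e0 : 0 < (x - s) / 2 by rewrite divr_gt0 ?subr_gt0.
  have /ereal_inf_gtP[c ac Fc] := left _ e0.
  by apply: le_trans (Fc _ _); [rewrite lee_fin ltW|apply/andP; split=> //; lra].
- have e0 : 0 < (s - x) / 2 by rewrite divr_gt0 ?subr_gt0.
  have /ereal_inf_gtP[c ac Fc] := right _ e0.
  by apply: le_trans (Fc _ _); [rewrite lee_fin ltW|rewrite /=; lra].
Qed.

Lemma well_separated_min_uniq F a x y :
  well_separated_min F a x -> well_separated_min F a y -> x = y.
Proof.
move=> [x0 Fx left right] [y0 Fy _ _]; have [xy|yx|//] := ltgtP x y.
- have e0 : 0 < (y - x) / 2 by rewrite divr_gt0 ?subr_gt0.
  have /ereal_inf_gtP[c ac Fc] := right _ e0.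
  by have := Fc y ltac:(rewrite /=; lra); rewrite Fy lee_fin leNgt ac.
- have e0 : 0 < (x - y) / 2 by rewrite divr_gt0 ?subr_gt0.
  have /ereal_inf_gtP[c ac Fc] := left _ e0.
  by have := Fc y ltac:(apply/andP; split=> //; lra); rewrite Fy lee_fin leNgt ac.
Qed.

End well_separated.

Lemma is_derive_within_continuous (R : realType) (f df : R -> R) (a x y : R) :
  (forall t, a < t -> is_derive t 1 f (df t)) -> a < x -> {within `[x, y], continuous f}.
Proof.
move=> fdf ax; apply: derivable_within_continuous => t /[!in_itv] /= /andP[xt _].
by have [] := fdf t (lt_le_trans ax xt).
Qed.

Lemma MVT_gt (R : realType) (f df : R -> R) (a x y : R) :
  (forall t, a < t -> is_derive t 1 f (df t)) -> a < x -> x < y ->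
  exists2 c, x < c < y & f y - f x = df c * (y - x).
Proof.
move=> fdf ax xy.
have fdf' t : t \in `]x, y[ -> is_derive t 1 f (df t).
  by move=> /[!in_itv] /= /andP[xt _]; apply: fdf; exact: lt_trans ax xt.
have [c /[!in_itv] /= cxy fE] := MVT xy fdf' (is_derive_within_continuous fdf ax).
by exists c.
Qed.

Lemma is_derive_derive1 (R : realType) (f df : R -> R) (x l : R) :
  (\forall y \near x, is_derive y (1 : R) f (df y)) -> is_derive x 1 df l ->
  is_derive x 1 (derive1 f) l.
Proof.
move=> near_df; apply: near_eq_is_derive; apply: filterS near_df => y [_ dfy].
by rewrite derive1E dfy.
Qed.

Section legendre.
Variables (R : realType) (phi dphi ddphi : R -> R) (l : R).
Hypothesis l_lt0 : l < 0.
Hypothesis is_derive_phi : forall t, l < t -> is_derive t 1 phi (dphi t).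
Hypothesis is_derive_dphi : forall t, l < t -> is_derive t 1 dphi (ddphi t).
Hypothesis ddphi_gt0 : forall t, l < t -> 0 < ddphi t.
Hypothesis dphi0 : dphi 0 = 0.

Lemma dphi_lt x y : l < x -> x < y -> dphi x < dphi y.
Proof.
move=> hx xy; rewrite -subr_gt0; have [c /andP[xc _] ->] := MVT_gt is_derive_dphi hx xy.
by rewrite mulr_gt0 ?subr_gt0// ddphi_gt0//; exact: lt_trans xc.
Qed.

Lemma dphi_gt0 t : 0 < t -> 0 < dphi t.
Proof. by move=> t0; rewrite -dphi0; exact: dphi_lt l_lt0 t0. Qed.

Lemma phi_ge_tangent t u : l < t -> l < u -> phi t + dphi t * (u - t) <= phi u.
Proof.
move=> ht hu; rewrite -lerBrDl; have [tu|ut|->] := ltgtP t u; last by rewrite !subrr mulr0.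
- have [c /andP[tc _] ->] := MVT_gt is_derive_phi ht tu.
  by rewrite ler_pM2r ?subr_gt0// ltW// dphi_lt.
- have [c /andP[uc ct] E] := MVT_gt is_derive_phi hu ut.
  have : dphi c < dphi t by apply: dphi_lt ct; exact: lt_trans hu uc.
  have : 0 < t - u by rewrite subr_gt0.
  nra.
Qed.

Definition legendre (s : R) : \bar R :=
  ereal_sup [set ((s * t - phi t)%:E) | t in [set t : R | 0 <= t]].
Definition phi_ratio (t : R) := phi t / (t ^+ 2 / 2).
Definition legendre_ratio (s : R) := (legendre s * ((s ^+ 2 / 2)^-1)%:E)%E.

Lemma legendre_ge s t : 0 <= t -> ((s * t - phi t)%:E <= legendre s)%E.
Proof. by move=> t0; apply: ereal_sup_ubound; exists t. Qed.

Lemma legendre_dphi t : 0 <= t -> legendre (dphi t) = (dphi t * t - phi t)%:E.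
Proof.
move=> t0; apply/eqP; rewrite eq_le legendre_ge// andbT.
apply: ge_ereal_sup => _ [u /= u0 <-]; rewrite lee_fin.
have := phi_ge_tangent (lt_le_trans l_lt0 t0) (lt_le_trans l_lt0 u0); lra.
Qed.

(* Take [t = s / m] in the supremum defining [legendre s]. *)
Lemma legendre_ratio_ge m s : 0 < m -> 0 < s ->
  ((m^-1 + (m - phi_ratio (s / m)) / m ^+ 2)%:E <= legendre_ratio s)%E.
Proof.
move=> m0 s_gt0; have := legendre_ge s (ltW (divr_gt0 s_gt0 m0)).
have w0 : (0 <= ((s ^+ 2 / 2)^-1)%:E)%E by rewrite lee_fin invr_ge0 divr_ge0 ?sqr_ge0.
move/(lee_wpmul2r w0); apply: le_trans; rewrite -EFinM lee_fin le_eqVlt; apply/orP; left.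
by apply/eqP; rewrite /phi_ratio; field; rewrite !gt_eqF ?mulr_gt0 ?exprn_gt0 ?divr_gt0.
Qed.

(* With [s = dphi t], [r = s / t] and [H = legendre_ratio s] one has
   [phi_ratio t = 2 r - H r ^ 2 <= 1 / H]. *)
Lemma phi_ratio_le_inv t c : 0 < t -> 0 < c ->
  (c%:E <= legendre_ratio (dphi t))%E -> phi_ratio t <= c^-1.
Proof.
move=> t0 c0; rewrite /legendre_ratio (legendre_dphi (ltW t0)) -EFinM lee_fin.
set s := dphi t; have s_gt0 : 0 < s by exact: dphi_gt0.
set H := (s * t - phi t) * (s ^+ 2 / 2)^-1 => cH.
have H0 : 0 < H by exact: lt_le_trans cH.
apply: (@le_trans _ _ H^-1); last by rewrite lef_pV2 ?posrE.
have -> : phi_ratio t = 2 * (s / t) - H * (s / t) ^+ 2.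
  by rewrite /phi_ratio /H; field; rewrite !gt_eqF.
rewrite -subr_ge0 (_ : H^-1 - _ = (H * (s / t) - 1) ^+ 2 / H).
  by rewrite divr_ge0 ?sqr_ge0 ?ltW.
by field; rewrite !gt_eqF.
Qed.

Lemma dphi_at_ratio_max m t : 0 < t ->
  (forall u, 0 < u -> phi_ratio u <= m) -> phi_ratio t = m -> dphi t = m * t.
Proof.
move=> t0 le_m eq_m; pose F u := phi u - m / 2 * u ^+ 2.
have dF u : l < u -> is_derive u 1 F (dphi u - m * u).
  move=> hu; have dsq := is_deriveZ (m / 2) (is_deriveX 2 (is_derive_id u 1)).
  have := is_deriveB (is_derive_phi hu) dsq.
  suff -> : dphi u - m * u = dphi u - m / 2 * (2 * u ^+ 1 * 1) by [].
  by rewrite expr1 mulr1 mulrA divfK ?pnatr_eq0.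
have F_le u : 0 < u -> F u <= F t.
  move=> u0; have := le_m u u0; rewrite /phi_ratio ler_pdivrMr ?divr_gt0 ?exprn_gt0//.
  have : phi t = m * (t ^+ 2 / 2) by rewrite -eq_m /phi_ratio divfK// gt_eqF ?divr_gt0 ?exprn_gt0.
  rewrite /F; lra.
have in_0_2t u : u \in `]0, 2 * t[ -> 0 < u by rewrite in_itv => /andP[].
have [_ F't] : is_derive t 1 F 0.
  apply: (@derive1_at_max _ F 0 (2 * t)); first by rewrite mulr_ge0 ?ltW.
  - by move=> u /in_0_2t u0; have [] := dF u (lt_trans l_lt0 u0).
  - by rewrite in_itv /=; apply/andP; split=> //; lra.
  - by move=> u /in_0_2t; exact: F_le.
have [_] := dF t (lt_trans l_lt0 t0); rewrite F't; lra.
Qed.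

Lemma legendre_ratio_inf_gt m (S : set R) c : 0 < m -> c < m ->
  (forall s, S s -> 0 < s /\ phi_ratio (s / m) <= c) ->
  ((m^-1)%:E < ereal_inf [set legendre_ratio s | s in S])%E.
Proof.
move=> m0 cm Sc; apply/ereal_inf_gtP; exists (m^-1 + (m - c) / m ^+ 2).
  by rewrite ltrDl divr_gt0 ?exprn_gt0 ?subr_gt0.
move=> s /Sc[s_gt0 hc]; apply: le_trans (legendre_ratio_ge m0 s_gt0).
by rewrite lee_fin lerD2l ler_pM2r ?invr_gt0 ?exprn_gt0// lerD2l lerN2.
Qed.

Lemma phi_ratio_sup_lt m (S : set R) c : 0 < m -> m^-1 < c ->
  (forall t, S t -> 0 < t /\ (c%:E <= legendre_ratio (dphi t))%E) ->
  (ereal_sup [set (phi_ratio t)%:E | t in S] < m%:E)%E.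
Proof.
move=> m0 mc St; have c0 : 0 < c by apply: lt_trans mc; rewrite invr_gt0.
apply/ereal_sup_EFin_ltP; exists c^-1; first by rewrite -[m]invrK ltf_pV2 ?posrE ?invr_gt0.
by move=> t /St[t0 hc]; exact: phi_ratio_le_inv.
Qed.

Lemma well_separated_max_min m t : 0 < m -> well_separated_max phi_ratio m t ->
  [/\ well_separated_min legendre_ratio m^-1 (t * m), dphi t = t * m
     & phi t = m * (t ^+ 2 / 2)].
Proof.
move=> m0 max_t; have le_m := well_separated_max_le max_t.
case: max_t => t0 eq_m left right.
have dt : dphi t = t * m by rewrite mulrC; exact: dphi_at_ratio_max.
have pt : phi t = m * (t ^+ 2 / 2).
  by rewrite -eq_m /phi_ratio divfK// gt_eqF ?divr_gt0 ?exprn_gt0.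
split=> //; split.
- exact: mulr_gt0.
- rewrite /legendre_ratio -dt legendre_dphi ?ltW// -EFinM dt pt; congr EFin.
  by field; rewrite !gt_eqF.
- move=> e e0; have /ereal_sup_EFin_ltP[c cm hc] := left _ (divr_gt0 e0 m0).
  apply: (legendre_ratio_inf_gt m0 cm) => s /andP[s_gt0 se]; split=> //.
  apply: hc; apply/andP; split; first exact: divr_gt0.
  by rewrite ltr_pdivrMr// mulrBl divfK ?gt_eqF.
- move=> e e0; have /ereal_sup_EFin_ltP[c cm hc] := right _ (divr_gt0 e0 m0).
  apply: (legendre_ratio_inf_gt m0 cm) => s /= se.
  have s_gt0 : 0 < s by apply: lt_trans se; rewrite addr_gt0// mulr_gt0.
  by split=> //; apply: hc => /=; rewrite ltr_pdivlMr// mulrDl divfK ?gt_eqF.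
Qed.

Lemma well_separated_min_max m s : 0 < m -> well_separated_min legendre_ratio m^-1 s ->
  well_separated_max phi_ratio m (s / m) /\ dphi (s / m) = s.
Proof.
move=> m0 min_s; have ge_m := well_separated_min_ge min_s.
case: min_s => s_gt0 eq_m left right; set t := s / m.
have t0 : 0 < t by exact: divr_gt0.
have le_m u : 0 < u -> phi_ratio u <= m.
  move=> u0; rewrite -[m]invrK; apply: phi_ratio_le_inv; rewrite ?invr_gt0//.
  exact/ge_m/dphi_gt0.
have eq_mt : phi_ratio t = m.
  apply/eqP; rewrite eq_le le_m//=; have := legendre_ratio_ge m0 s_gt0.
  rewrite eq_m lee_fin gerDl -/t pmulr_lle0 ?invr_gt0 ?exprn_gt0//; lra.
have dt : dphi t = s by rewrite (dphi_at_ratio_max t0 le_m eq_mt) mulrC divfK ?gt_eqF.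
split=> //; split=> // e e0.
- have [te|te] := leP (t - e) 0.
    by apply/ereal_sup_EFin_ltP; exists 0 => // u /andP[u0 ue]; lra.
  have e'0 : 0 < s - dphi (t - e).
    by rewrite subr_gt0 -dt dphi_lt ?(lt_trans l_lt0 te)//; lra.
  have /ereal_inf_gtP[c mc hc] := left _ e'0.
  apply: (phi_ratio_sup_lt m0 mc) => u /andP[u0 ue]; split=> //.
  apply: hc; apply/andP; split; first exact: dphi_gt0.
  by rewrite opprB addrC subrK (dphi_lt (lt_trans l_lt0 u0)).
- have e'0 : 0 < dphi (t + e) - s.
    by rewrite subr_gt0 -dt dphi_lt ?(lt_trans l_lt0 t0)//; lra.
  have /ereal_inf_gtP[c mc hc] := right _ e'0.
  apply: (phi_ratio_sup_lt m0 mc) => u /= ue.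
  have u0 : 0 < u by apply: lt_trans ue; lra.
  split=> //; apply: hc => /=; rewrite addrC subrK dphi_lt//.
  by apply: lt_trans l_lt0 _; lra.
Qed.

Lemma dphi_inj x y : l < x -> l < y -> dphi x = dphi y -> x = y.
Proof.
move=> hx hy exy; apply/eqP; rewrite eq_le !leNgt; apply/andP; split; apply/negP.
- by move/(dphi_lt hy); rewrite exy ltxx.
- by move/(dphi_lt hx); rewrite exy ltxx.
Qed.

(* Outside the image of [dphi] this is the junk value [0]. *)
Definition dphi_inv (s : R) := xget 0 [set t | l < t /\ dphi t = s].

Lemma dphi_invK t : l < t -> dphi_inv (dphi t) = t.
Proof.
move=> ht; have : exists u, l < u /\ dphi u = dphi t by exists t.
by move/(xgetPex 0) => [hu]; exact: dphi_inj.
Qed.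

Lemma dphi_inv_itv a b s : l < a -> a < b -> dphi a < s < dphi b ->
  a < dphi_inv s < b /\ dphi (dphi_inv s) = s.
Proof.
move=> ha ab /andP[a_s sb].
have range : Num.min (dphi a) (dphi b) <= s <= Num.max (dphi a) (dphi b).
  by rewrite ge_min le_max (ltW a_s) (ltW sb) orbT.
have [c /[!in_itv] /= /andP[ac cb] dc] :=
  IVT (ltW ab) (is_derive_within_continuous is_derive_dphi ha) range.
rewrite -dc dphi_invK ?(lt_le_trans ha ac)//; split=> //; apply/andP; split.
- by rewrite lt_neqAle ac andbT; apply: contraTneq a_s => ->; rewrite dc ltxx.
- by rewrite lt_neqAle cb andbT; apply: contraTneq sb => <-; rewrite dc ltxx.
Qed.

Lemma near_dphi_inv t : 0 < t ->
  \forall s \near dphi t, 0 < dphi_inv s /\ dphi (dphi_inv s) = s.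
Proof.
move=> t0; have ha : l < t / 2 by apply: lt_trans l_lt0 _; rewrite divr_gt0.
have ab : t / 2 < t + 1 by lra.
have : dphi t \in `]dphi (t / 2), dphi (t + 1)[.
  by rewrite in_itv /= !dphi_lt// ?(lt_trans l_lt0 t0)//; lra.
move/near_in_itvoo; apply: filterS => s /[!in_itv] /= /(dphi_inv_itv ha ab)[/andP[ts _] ->].
by split=> //; apply: lt_trans ts; rewrite divr_gt0.
Qed.

Lemma is_derive_dphi_inv t : l < t -> is_derive (dphi t) 1 dphi_inv (ddphi t)^-1.
Proof.
move=> ht; apply: is_derive_inverse; last 2 first.
- exact: is_derive_dphi.
- by rewrite gt_eqF ?ddphi_gt0.
- by near=> u; apply: dphi_invK; near: u; exact: lt_nbhsr.
- near=> u; apply: differentiable_continuous; apply/derivable1_diffP.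
  have [] // := is_derive_dphi (_ : l < u).
  by near: u; exact: lt_nbhsr.
Unshelve. all: by end_near.
Qed.

Lemma is_derive_legendre t : 0 < t -> is_derive (dphi t) 1 (fine \o legendre) t.
Proof.
move=> t0; have ht := lt_trans l_lt0 t0.
have di := is_derive_dphi_inv ht.
have dphi_t : is_derive (dphi_inv (dphi t)) 1 phi (dphi t).
  by rewrite dphi_invK//; exact: is_derive_phi.
have dM := is_deriveM (is_derive_id (dphi t) 1) di.
have dC := is_derive1_comp dphi_t di.
apply: near_eq_is_derive (is_derive_eq (is_deriveB dM dC) _); last first.
  by rewrite /= dphi_invK// /GRing.scale /=; ring.
apply: filterS (near_dphi_inv t0) => s [u0 us] /=.
have -> : legendre s = legendre (dphi (dphi_inv s)) by rewrite us.
by rewrite legendre_dphi ?ltW//= us.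
Qed.

Lemma is_derive2_legendre t : 0 < t ->
  is_derive (dphi t) 1 (derive1 (fine \o legendre)) (ddphi t)^-1.
Proof.
move=> t0; apply: is_derive_derive1 (is_derive_dphi_inv (lt_trans l_lt0 t0)).
apply: filterS (near_dphi_inv t0) => s [u0 us].
by have := is_derive_legendre u0; rewrite us.
Qed.

Lemma well_separated_maxP m : 0 < m ->
  (exists t, well_separated_max phi_ratio m t) <->
  (exists s, well_separated_min legendre_ratio m^-1 s).
Proof.
move=> m0; split=> [[t /(well_separated_max_min m0)[min_tm _ _]]|[s]].
  by exists (t * m).
by move=> /(well_separated_min_max m0)[max_sm _]; exists (s / m).
Qed.

Lemma well_separated_duality m t s : 0 < m ->
  well_separated_max phi_ratio m t -> well_separated_min legendre_ratio m^-1 s ->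
  let I := fun s => fine (legendre s) in
  [/\ (phi t)%:E = legendre s, legendre s = (s * t / 2)%:E,
      [/\ derivable phi t 1, s = derive1 phi t & s = t * m],
      [/\ derivable I s 1, t = derive1 I s & t = s / m]
    & [/\ derivable (derive1 phi) t 1, derivable (derive1 I) s 1 &
          derive1 (derive1 I) s * derive1 (derive1 phi) t = 1]].
Proof.
move=> m0 max_t min_s I; have t0 : 0 < t by case: max_t.
have [min_tm dt pt] := well_separated_max_min m0 max_t.
have es : s = dphi t by rewrite dt; exact: well_separated_min_uniq min_s min_tm.
have ht := lt_trans l_lt0 t0.
have Ls : legendre s = (s * t / 2)%:E.
  by rewrite es legendre_dphi ?ltW// dt pt; congr EFin; field.
have [dphi_t D1phi] := is_derive_phi ht.
have [d2phi_t D2phi] : is_derive t 1 (derive1 phi) (ddphi t).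
  apply: is_derive_derive1 (is_derive_dphi ht).
  by apply: filterS (lt_nbhsr ht) => u; exact: is_derive_phi.
have [dI_s DI] : is_derive s 1 I t by rewrite es; exact: is_derive_legendre.
have [d2I_s D2I] : is_derive s 1 (derive1 I) (ddphi t)^-1.
  by rewrite es; exact: is_derive2_legendre.
split.
- by rewrite Ls pt; congr EFin; rewrite es dt; field.
- exact: Ls.
- split; [exact: dphi_t|by rewrite derive1E D1phi|by rewrite es dt].
- split; [exact: dI_s|by rewrite derive1E DI|by rewrite es dt mulfK ?gt_eqF].
- split; [exact: d2phi_t|exact: d2I_s|].
  by rewrite !derive1E D2I D2phi mulVf ?gt_eqF ?ddphi_gt0.
Qed.

End legendre.

Section powexpR.
Variable R : realType.
Implicit Types (c e t : R) (k : nat).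

Lemma normrX_le_expR k e c : 0 < e ->
  `|c| ^+ k <= k`!%:R / e ^+ k * expR (e * `|c|).
Proof.
move=> e0; case: k => [|k].
  rewrite !expr0 fact0 invr1 !mul1r -[leLHS]expR0 ler_expR.
  by rewrite mulr_ge0// ltW.
have h : (e * `|c|) ^+ k.+1 <= k.+1`!%:R * expR (e * `|c|).
  rewrite -ler_pdivrMl ?ltr0n ?fact_gt0// mulrC.
  apply: le_trans (expR_ge1Dxn k (mulr_ge0 (ltW e0) (normr_ge0 c))).
  by rewrite lerDr.
rewrite exprMn in h.
by rewrite -mulrA mulrC -mulrA ler_pdivlMl ?exprn_gt0// mulrC.
Qed.

Lemma expR_mul_le_ends (a b f c : R) : a <= b -> b <= f ->
  expR (b * c) <= expR (a * c) + expR (f * c).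
Proof.
move=> ab bf; have [c0|c0] := leP 0 c.
  by apply: ler_wpDl; [exact: expR_ge0|rewrite ler_expR ler_wpM2r].
by apply: ler_wpDr; [exact: expR_ge0|rewrite ler_expR ler_wnM2r// ltW].
Qed.

Lemma normr_powexpR_le k e t c : 0 < e ->
  `|c ^+ k * expR (t * c)| <=
    k`!%:R / e ^+ k * (expR ((t - e) * c) + expR ((t + e) * c)).
Proof.
move=> e0; rewrite normrM normrX (ger0_norm (expR_ge0 _)).
apply: le_trans (ler_wpM2r (expR_ge0 _) (normrX_le_expR k c e0)) _.
rewrite -[X in X <= _]mulrA; apply: ler_wpM2l; first by rewrite divr_ge0 ?exprn_ge0 ?ltW.
rewrite -expRD.
have [c0|c0] := leP 0 c.
  by rewrite ger0_norm// -mulrDl addrC ler_wpDl ?expR_ge0.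
rewrite ltr0_norm// ler_wpDr ?expR_ge0// ler_expR le_eqVlt; apply/orP; left; apply/eqP; ring.
Qed.

Lemma normr_powexpR_le_near k e t x c : 0 < e -> t - e < x < t + e ->
  `|c ^+ k * expR (x * c)| <=
    2 * (k`!%:R / e ^+ k) * (expR ((t - 2 * e) * c) + expR ((t + 2 * e) * c)).
Proof.
move=> e0 /andP[tx xt]; apply: le_trans (normr_powexpR_le k x c e0) _.
rewrite [X in _ <= X]mulrAC [X in _ <= X]mulrC.
apply: ler_wpM2l; first by rewrite divr_ge0 ?exprn_ge0 ?ltW.
by rewrite [2 * (_ + _)]mulr_natl mulr2n; apply: lerD; apply: expR_mul_le_ends; lra.
Qed.

Lemma is_derive_powexpR k c t :
  is_derive t 1 (fun s => c ^+ k * expR (s * c)) (c ^+ k.+1 * expR (t * c)).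
Proof.
have dlin : is_derive t 1 (fun s : R => s * c) c.
  have -> : (fun s : R => s * c) = c \*: @id R by apply/funext => s; rewrite /= mulrC.
  by rewrite -[X in is_derive _ _ _ X]mulr1; exact: is_deriveZ.
have -> : c ^+ k.+1 * expR (t * c) = c ^+ k *: (expR (t * c) * c).
  by rewrite exprS /GRing.scale /=; ring.
have dexp := is_deriveZ (c ^+ k) (is_derive1_comp (is_derive_expR _) dlin).
exact: dexp.
Qed.

End powexpR.

Section real_integrals.
Variables (d : measure_display) (T : measurableType d) (R : realType)
  (mu : {measure set T -> \bar R}) (D : set T).
Hypothesis mD : measurable D.

Lemma integrable_EFinD (f g : T -> R) :
  mu.-integrable D (EFin \o f) -> mu.-integrable D (EFin \o g) ->
  mu.-integrable D (EFin \o (fun x => f x + g x)).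
Proof. exact: integrableD. Qed.

Lemma integrable_EFinZl (k : R) (f : T -> R) :
  mu.-integrable D (EFin \o f) -> mu.-integrable D (EFin \o (fun x => k * f x)).
Proof. exact: integrableZl. Qed.

Lemma integral_eq0_mulr_pos (f g : T -> R) :
  measurable_fun D f -> measurable_fun D g ->
  (forall x, D x -> 0 <= f x) -> (forall x, D x -> 0 < g x) ->
  (\int[mu]_(x in D) (f x * g x)%:E = 0)%E -> (\int[mu]_(x in D) (f x)%:E = 0)%E.
Proof.
move=> mf mg f_ge0 g_gt0 fg0.
have mfg : measurable_fun D (EFin \o (f \* g)) by exact/measurable_EFinP/measurable_funM.
have /(ae_eq_integral_abs mu mD mfg) fg_ae0 : (\int[mu]_(x in D) `|(f x * g x)%:E| = 0)%E.
  rewrite -fg0; apply: eq_integral => x /[!inE] Dx.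
  by rewrite gee0_abs// lee_fin mulr_ge0 ?f_ge0 ?ltW ?g_gt0.
have f_ae0 : ae_eq mu D (EFin \o f) (cst 0%E).
  apply: filterS fg_ae0 => x fgx Dx; have /eqP := fgx Dx.
  by rewrite /= eqe mulf_eq0 (gt_eqF (g_gt0 _ Dx)) orbF => /eqP ->.
rewrite (ae_eq_integral _ _ mD _ _ f_ae0) ?integral0//; exact/measurable_EFinP.
Qed.

End real_integrals.

Section tilted_moments.
Variables (d : measure_display) (T : measurableType d) (R : realType)
  (P : probability T R) (X : {RV P >-> R}) (s0 : R).
Hypothesis mgf_fin : forall t, - s0 <= t -> ('M_P X t < +oo)%E.

Definition tilted_pow (k : nat) (t : R) (y : T) : R := X y ^+ k * expR (t * X y).
Definition tmoment (k : nat) (t : R) : R := \int[P]_(y in setT) tilted_pow k t y.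

Lemma measurable_tilted_pow k t : measurable_fun setT (tilted_pow k t).
Proof.
have mX : measurable_fun setT X := measurable_funPT X.
apply: measurable_funM; first exact: measurable_funX.
by apply: measurableT_comp => //; exact: measurable_funM.
Qed.

Lemma integrable_tilted_pow0 t : - s0 <= t -> P.-integrable setT (EFin \o tilted_pow 0 t).
Proof.
move=> ht; apply/integrableP; split; first exact/measurable_EFinP/measurable_tilted_pow.
apply: le_lt_trans (mgf_fin ht); rewrite /mmt_gen_fun unlock le_eqVlt; apply/orP; left.
apply/eqP/eq_integral => y _ /=.
by rewrite /tilted_pow expr0 mul1r ger0_norm ?expR_ge0// mulrC.
Qed.

Lemma integrable_tilted_pow k t : - s0 < t -> P.-integrable setT (EFin \o tilted_pow k t).
Proof.
move=> ht; set e := t + s0; have e0 : 0 < e by rewrite /e; lra.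
apply: (@le_integrable _ _ _ P setT measurableT _
  (EFin \o (fun y => k`!%:R / e ^+ k * (tilted_pow 0 (t - e) y + tilted_pow 0 (t + e) y)))).
- exact/measurable_EFinP/measurable_tilted_pow.
- move=> y _ /=; rewrite lee_fin /tilted_pow !expr0 !mul1r.
  exact: le_trans (normr_powexpR_le k t (X y) e0) (ler_norm _).
- apply: integrable_EFinZl => //.
  by apply: integrable_EFinD => //; apply: integrable_tilted_pow0; rewrite /e; lra.
Qed.

Lemma is_derive_tmoment k t : - s0 < t -> is_derive t 1 (tmoment k) (tmoment k.+1 t).
Proof.
move=> ht; set e := (t + s0) / 3; have e0 : 0 < e by rewrite /e; lra.
have dpow (x : R) y : is_derive x 1 (tilted_pow k ^~ y) (tilted_pow k.+1 x y).
  exact: is_derive_powexpR.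
have partialE x y : partial1of2 (tilted_pow k) x y = tilted_pow k.+1 x y.
  by rewrite partial1of2E; have [_ ->] := dpow x y.
pose G y := 2 * (k.+1`!%:R / e ^+ k.+1) *
   (tilted_pow 0 (t - 2 * e) y + tilted_pow 0 (t + 2 * e) y).
have t_in : `]t - e, t + e[%classic t by rewrite /= in_itv /=; apply/andP; split; lra.
have intf x : `]t - e, t + e[%classic x -> P.-integrable setT (EFin \o tilted_pow k x).
  by rewrite /= in_itv /= => /andP[h1 _]; apply: integrable_tilted_pow; rewrite /e in h1; lra.
have derf x y : `]t - e, t + e[%classic x -> setT y -> derivable (tilted_pow k ^~ y) x 1.
  by move=> _ _; have [] := dpow x y.
have G_ge0 y : 0 <= G y.
  rewrite /G /tilted_pow !expr0 !mul1r; apply: mulr_ge0; last by rewrite addr_ge0 ?expR_ge0.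
  by rewrite mulr_ge0 ?divr_ge0 ?exprn_ge0 ?ltW.
have intG : P.-integrable setT (EFin \o G).
  rewrite /G; apply: integrable_EFinZl => //.
  by apply: integrable_EFinD => //; apply: integrable_tilted_pow0; rewrite /e; lra.
have G_ub x y : `]t - e, t + e[%classic x -> setT y ->
    `|partial1of2 (tilted_pow k) x y| <= G y.
  rewrite /= in_itv /= partialE /G /tilted_pow !expr0 !mul1r => xt _.
  exact: normr_powexpR_le_near.
have := derivable_under_integral measurableT t_in intf derf G_ge0 intG G_ub.
have := differentiation_under_integral measurableT t_in intf derf G_ge0 intG G_ub.
move=> dE dt; apply: DeriveDef; first exact: dt.
rewrite -derive1E /tmoment dE; apply: eq_Rintegral => y _; exact: partialE.
Qed.

End tilted_moments.

Section cgf_derivatives.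
Variables (d : measure_display) (T : measurableType d) (R : realType)
  (P : probability T R) (X : {RV P >-> R}) (s0 : R).
Hypothesis s0_gt0 : 0 < s0.
Hypothesis mgf_fin : forall t, - s0 <= t -> ('M_P X t < +oo)%E.
Hypothesis EX0 : ('E_P[X] = 0)%E.
Hypothesis VX1 : ('V_P[X] = 1)%E.

Local Notation tilted_pow := (tilted_pow X).
Local Notation tmoment := (tmoment X).
Let integrable_tpow k t := @integrable_tilted_pow _ _ _ P X s0 mgf_fin k t.
Let is_derive_tmom k t := @is_derive_tmoment _ _ _ P X s0 mgf_fin k t.
Let s0_lt0 : - s0 < 0. Proof. by rewrite oppr_lt0. Qed.

Lemma tilted_pow_at0 k y : tilted_pow k 0 y = X y ^+ k.
Proof. by rewrite /tilted_pow mul0r expR0 mulr1. Qed.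

Lemma tmoment00 : tmoment 0 0 = 1.
Proof.
rewrite /tmoment (@eq_Rintegral _ _ _ P setT (fun=> 1)); last first.
  by move=> y _; rewrite tilted_pow_at0.
by rewrite Rintegral_cst// mul1r; exact: (congr1 fine (probability_setT P)).
Qed.

Lemma tmoment10 : tmoment 1 0 = 0.
Proof.
rewrite /tmoment (@eq_Rintegral _ _ _ P setT X); last first.
  by move=> y _; rewrite tilted_pow_at0.
by rewrite /Rintegral -expectation_def EX0.
Qed.

Lemma tmoment20 : tmoment 2 0 = 1.
Proof.
rewrite /tmoment (@eq_Rintegral _ _ _ P setT (fun y => X y ^+ 2)); last first.
  by move=> y _; rewrite tilted_pow_at0.
move: VX1; rewrite /variance covariance.unlock EX0 /= expectation.unlock => V1.
rewrite /Rintegral (_ : (\int[P]_(x in setT) (X x ^+ 2)%:E)%E = 1%E) // -V1.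
by apply: eq_integral => y _ /=; rewrite /GRing.mul /= subr0 expr2.
Qed.

Lemma tmoment0_ge1 t : - s0 < t -> 1 <= tmoment 0 t.
Proof.
move=> ht; have i0 := integrable_tpow 0 s0_lt0; have i1 := integrable_tpow 1 s0_lt0.
have i1t := integrable_EFinZl measurableT t i1.
have iD := integrable_EFinD measurableT i0 i1t.
have := le_Rintegral measurableT iD (integrable_tpow 0 ht).
rewrite RintegralD// RintegralZl// -/(tmoment 0 0) -/(tmoment 1 0) tmoment00 tmoment10.
rewrite mulr0 addr0; apply=> y _.
by rewrite !tilted_pow_at0 expr0 expr1 /tilted_pow expr0 mul1r expR_ge1Dx.
Qed.

Lemma tmoment0_gt0 t : - s0 < t -> 0 < tmoment 0 t.
Proof. by move=> ht; apply: lt_le_trans (tmoment0_ge1 ht). Qed.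

Lemma tilted_sqrBE t c : (fun y => (X y - c) ^+ 2 * expR (t * X y)) =
  (fun y => tilted_pow 2 t y + (- (2 * c) * tilted_pow 1 t y + c ^+ 2 * tilted_pow 0 t y)).
Proof. by apply/funext => y; rewrite /tilted_pow; ring. Qed.

Lemma integrable_tilted_sqrB t c : - s0 < t ->
  P.-integrable setT (EFin \o (fun y => (X y - c) ^+ 2 * expR (t * X y))).
Proof.
move=> ht; rewrite tilted_sqrBE.
apply: integrable_EFinD => //; first exact: integrable_tpow.
by apply: integrable_EFinD => //; apply: integrable_EFinZl => //; exact: integrable_tpow.
Qed.

Lemma tmoment_sqrB t c : - s0 < t ->
  \int[P]_(y in setT) ((X y - c) ^+ 2 * expR (t * X y)) =
  tmoment 2 t - 2 * c * tmoment 1 t + c ^+ 2 * tmoment 0 t.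
Proof.
move=> ht; have i0 := integrable_tpow 0 ht; have i1 := integrable_tpow 1 ht.
have i1Z := integrable_EFinZl measurableT (- (2 * c)) i1.
have i0Z := integrable_EFinZl measurableT (c ^+ 2) i0.
rewrite tilted_sqrBE !RintegralD//; [|exact: integrable_tpow|exact: integrable_EFinD].
rewrite (@RintegralZl _ _ _ P setT (tilted_pow 1 t) _ measurableT i1).
by rewrite (@RintegralZl _ _ _ P setT (tilted_pow 0 t) _ measurableT i0) /tmoment; ring.
Qed.

(* This is [tmoment 0 t ^+ 2] times the variance of the law of [X] tilted by [e^(tX)];
   it is positive because [X] is not a.s. constant. *)
Lemma tmoment_var_gt0 t : - s0 < t -> 0 < tmoment 2 t * tmoment 0 t - tmoment 1 t ^+ 2.
Proof.
move=> ht; set c := tmoment 1 t / tmoment 0 t; have M0 := tmoment0_gt0 ht.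
suff Q_gt0 : 0 < \int[P]_(y in setT) ((X y - c) ^+ 2 * expR (t * X y)).
  rewrite tmoment_sqrB// in Q_gt0.
  have -> : tmoment 2 t * tmoment 0 t - tmoment 1 t ^+ 2 =
      (tmoment 2 t - 2 * c * tmoment 1 t + c ^+ 2 * tmoment 0 t) * tmoment 0 t.
    by rewrite /c; field; rewrite gt_eqF.
  exact: mulr_gt0.
have mX : measurable_fun setT X := measurable_funPT X.
rewrite lt_neqAle Rintegral_ge0 ?andbT => [|y _]; last by rewrite mulr_ge0 ?sqr_ge0 ?expR_ge0.
apply/eqP => /esym Q0.
have sqr0 : (\int[P]_(y in setT) ((X y - c) ^+ 2)%:E = 0)%E.
  apply: (@integral_eq0_mulr_pos _ _ _ P setT measurableT _ (fun y => expR (t * X y))).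
  - by apply: measurable_funX; exact: measurable_funB.
  - by apply: measurableT_comp => //; exact: measurable_funM.
  - by move=> y _; exact: sqr_ge0.
  - by move=> y _; exact: expR_gt0.
  rewrite -(fineK (integrable_fin_num measurableT (integrable_tilted_sqrB c ht))).
  by rewrite -/(Rintegral _ _ _) Q0.
have := tmoment_sqrB c s0_lt0; rewrite tmoment20 tmoment10 tmoment00.
rewrite (@eq_Rintegral _ _ _ P setT (fun y => (X y - c) ^+ 2)) => [|y _]; last first.
  by rewrite mul0r expR0 mulr1.
by rewrite /Rintegral sqr0 /=; have := sqr_ge0 c; lra.
Qed.

Definition dcgf (t : R) := tmoment 1 t / tmoment 0 t.
Definition d2cgf (t : R) := (tmoment 2 t * tmoment 0 t - tmoment 1 t ^+ 2) / tmoment 0 t ^+ 2.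

Lemma cgfE t : cgf P X t = ln (tmoment 0 t).
Proof.
rewrite /cgf /mmt_gen_fun unlock /tmoment /Rintegral; congr (ln (fine _)).
by apply: eq_integral => y _ /=; rewrite /tilted_pow expr0 mul1r mulrC.
Qed.

Lemma is_derive_cgf t : - s0 < t -> is_derive t 1 (cgf P X) (dcgf t).
Proof.
move=> ht; have M0 := tmoment0_gt0 ht.
have -> : cgf P X = (@ln R) \o tmoment 0 by apply/funext => u; rewrite cgfE.
have h := is_derive1_comp (is_derive1_ln M0) (is_derive_tmom 0 ht).
by rewrite /dcgf mulrC.
Qed.

Lemma is_derive_dcgf t : - s0 < t -> is_derive t 1 dcgf (d2cgf t).
Proof.
move=> ht; have M0 := tmoment0_gt0 ht.
have hV := is_deriveV (lt0r_neq0 M0) (is_derive_tmom 0 ht).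
have h := is_deriveM (is_derive_tmom 1 ht) hV.
have -> : dcgf = tmoment 1 * (fun u => (tmoment 0 u)^-1) by apply/funext.
suff -> : d2cgf t = tmoment 1 t *: (- tmoment 0 t ^- 2 *: tmoment 1 t) +
    (tmoment 0 t)^-1 *: tmoment 2 t by [].
by rewrite /d2cgf /GRing.scale /=; field; rewrite gt_eqF.
Qed.

Lemma d2cgf_gt0 t : - s0 < t -> 0 < d2cgf t.
Proof. by move=> ht; rewrite divr_gt0 ?exprn_gt0 ?tmoment0_gt0 ?tmoment_var_gt0. Qed.

Lemma dcgf0 : dcgf 0 = 0.
Proof. by rewrite /dcgf tmoment10 mul0r. Qed.

End cgf_derivatives.

Unset Implicit Arguments.

Theorem proposition5p1 (d : measure_display) (T : measurableType d) (R : realType)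
  (P : probability T R) (X : {RV P >-> R}) (m : R) :
  ('E_P[X] = 0)%E ->
  ('V_P[X] = 1)%E ->
  (exists sigma0 : R, 0 < sigma0 /\ forall t : R, - sigma0 <= t -> ('M_P X t < +oo)%E) ->
  1 < m ->
  let A (ts : R) :=
    [/\ 0 < ts, cgf P X ts / (ts ^+ 2 / 2) = m,
        forall e : R, 0 < e ->
          (ereal_sup [set (cgf P X t / (t ^+ 2 / 2))%R%:E | t in [set t : R | (0 < t < ts - e)%R]]
             < m%:E)%E
      & forall e : R, 0 < e ->
          (ereal_sup [set (cgf P X t / (t ^+ 2 / 2))%R%:E | t in [set t : R | (ts + e < t)%R]]
             < m%:E)%E] in
  let B (ss : R) :=
    [/\ 0 < ss, (rate P X ss * ((ss ^+ 2 / 2)^-1)%R%:E = (m^-1)%R%:E)%E,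
        forall e : R, 0 < e ->
          ((m^-1)%R%:E < ereal_inf [set (rate P X s * ((s ^+ 2 / 2)^-1)%R%:E)%E
                                   | s in [set s : R | (0 < s < ss - e)%R]])%E
      & forall e : R, 0 < e ->
          ((m^-1)%R%:E < ereal_inf [set (rate P X s * ((s ^+ 2 / 2)^-1)%R%:E)%E
                                   | s in [set s : R | (ss + e < s)%R]])%E] in
  let phi := cgf P X in
  let I := fun s : R => fine (rate P X s) in
  ((exists ts, A ts) <-> (exists ss, B ss)) /\
  (forall ts ss, A ts -> B ss ->
    [/\ (phi ts)%:E = rate P X ss, rate P X ss = (ss * ts / 2)%:E,
        [/\ derivable phi ts 1, ss = derive1 phi ts & ss = ts * m],
        [/\ derivable I ss 1, ts = derive1 I ss & ts = ss / m]
      & [/\ derivable (derive1 phi) ts 1, derivable (derive1 I) ss 1 &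
            derive1 (derive1 I) ss * derive1 (derive1 phi) ts = 1]]).
Proof.
move=> EX0 VX1 [s0 [s0_gt0 mgf_fin]] m_gt1 A B phi I.
have m_gt0 : 0 < m by exact: lt_trans m_gt1.
have s0_lt0 : - s0 < 0 by rewrite oppr_lt0.
have dphi := is_derive_cgf s0_gt0 mgf_fin EX0.
have d2phi := is_derive_dcgf s0_gt0 mgf_fin EX0.
have d2phi_gt0 := d2cgf_gt0 s0_gt0 mgf_fin EX0 VX1.
have dphi0 := dcgf0 EX0.
split; first exact: (well_separated_maxP s0_lt0 dphi d2phi d2phi_gt0 dphi0 m_gt0).
move=> ts ss; exact: (well_separated_duality s0_lt0 dphi d2phi d2phi_gt0 m_gt0).
Qed.
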